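(* Let $(\mu_n)$ be a norm bounded sequence in $ba(\mathcal A)_+$, let $\Gamma(n)=\mathrm{co}(\mu_n,\mu_{n+1},\ldots)$ and $\lambda=\sum_n2^{-n}\mu_n$. There exist $\xi\in ba(\mathcal A,\lambda)_+$ and a sequence $(m_n)$ with $m_n\in\Gamma(n)$ for each $n$ such that, for every $k\in\mathbb N$, $\lim_n\|(\xi\wedge k\lambda)-(m_n\wedge k\lambda)\|=0$, and $\xi(A)\le\liminf_nm_n(A)$ for every $A\in\mathcal A$.
   Context: $\mathcal A$ algebra of subsets of $\Omega$; $ba(\mathcal A)$ the Banach lattice of bounded finitely additive real set functions with $\|\mu\|=|\mu|(\Omega)$, $ba(\mathcal A)_+$ its nonnegative elements and $\wedge$ the lattice infimum in $ba(\mathcal A)$. $\mathrm{co}$ denotes (finite) convex hull. $ba(\mathcal A,\lambda)_+$ is the set of nonnegative $\mu$ with $\mu\ll\lambda$, where $\mu\ll\lambda$ means for every $\varepsilon>0$ there is $\delta>0$ with $|\lambda|(A)<\delta\Rightarrow|\mu|(A)<\varepsilon$. *)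

From Stdlib Require Export Reals List.
Open Scope R_scope.

(* Set functions are maps (Omega -> Prop) -> R, only their
   values on members of the algebra matter. *)

Definition is_algebra {Omega : Type} (A : (Omega -> Prop) -> Prop) : Prop :=
  A (fun _ => True) /\
  (forall F, A F -> A (fun x => ~ F x)) /\
  (forall F G, A F -> A G -> A (fun x => F x \/ G x)).

Definition fin_additive {Omega : Type} (A : (Omega -> Prop) -> Prop)
  (mu : (Omega -> Prop) -> R) : Prop :=
  forall F G, A F -> A G -> (forall x, F x -> G x -> False) ->
    mu (fun x => F x \/ G x) = mu F + mu G.

Definition bounded_sf {Omega : Type} (A : (Omega -> Prop) -> Prop)
  (mu : (Omega -> Prop) -> R) : Prop :=
  exists M, forall F, A F -> Rabs (mu F) <= M.

Definition is_ba {Omega : Type} (A : (Omega -> Prop) -> Prop)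
  (mu : (Omega -> Prop) -> R) : Prop :=
  fin_additive A mu /\ bounded_sf A mu.

Definition is_ba_pos {Omega : Type} (A : (Omega -> Prop) -> Prop)
  (mu : (Omega -> Prop) -> R) : Prop :=
  is_ba A mu /\ (forall F, A F -> 0 <= mu F).

Definition is_partition {Omega : Type} (A : (Omega -> Prop) -> Prop)
  (E : Omega -> Prop) (l : list (Omega -> Prop)) : Prop :=
  (forall F, In F l -> A F) /\
  (forall i j, (i < length l)%nat -> (j < length l)%nat -> i <> j ->
     forall x, nth i l (fun _ => False) x -> nth j l (fun _ => False) x -> False) /\
  (forall x, E x <-> exists F, In F l /\ F x).

Definition sum_abs {Omega : Type} (mu : (Omega -> Prop) -> R)
  (l : list (Omega -> Prop)) : R :=
  fold_right (fun F s => Rabs (mu F) + s) 0 l.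

Definition tv_le {Omega : Type} (A : (Omega -> Prop) -> Prop)
  (mu : (Omega -> Prop) -> R) (E : Omega -> Prop) (c : R) : Prop :=
  forall l, is_partition A E l -> sum_abs mu l <= c.

Definition tv_lt {Omega : Type} (A : (Omega -> Prop) -> Prop)
  (mu : (Omega -> Prop) -> R) (E : Omega -> Prop) (d : R) : Prop :=
  exists c, c < d /\ tv_le A mu E c.

Definition norm_le {Omega : Type} (A : (Omega -> Prop) -> Prop)
  (mu : (Omega -> Prop) -> R) (c : R) : Prop :=
  tv_le A mu (fun _ => True) c.

Definition abs_cont {Omega : Type} (A : (Omega -> Prop) -> Prop)
  (mu lam : (Omega -> Prop) -> R) : Prop :=
  forall eps, 0 < eps -> exists delta, 0 < delta /\
    forall E, A E -> tv_lt A lam E delta -> tv_lt A mu E eps.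

Definition is_ba_ac_pos {Omega : Type} (A : (Omega -> Prop) -> Prop)
  (lam mu : (Omega -> Prop) -> R) : Prop :=
  is_ba_pos A mu /\ abs_cont A mu lam.

Definition le_on {Omega : Type} (A : (Omega -> Prop) -> Prop)
  (mu nu : (Omega -> Prop) -> R) : Prop :=
  forall F, A F -> mu F <= nu F.

Definition is_inf {Omega : Type} (A : (Omega -> Prop) -> Prop)
  (mu nu rho : (Omega -> Prop) -> R) : Prop :=
  is_ba A rho /\ le_on A rho mu /\ le_on A rho nu /\
  (forall tau, is_ba A tau -> le_on A tau mu -> le_on A tau nu -> le_on A tau rho).

Definition in_Gamma {Omega : Type} (A : (Omega -> Prop) -> Prop)
  (mu : nat -> (Omega -> Prop) -> R) (n : nat) (m : (Omega -> Prop) -> R) : Prop :=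
  exists (N : nat) (w : nat -> R),
    (forall i, 0 <= w i) /\ sum_f_R0 w N = 1 /\
    (forall F, A F -> m F = sum_f_R0 (fun i => w i * mu (n + i)%nat F) N).

Definition scale_sf {Omega : Type} (k : nat) (lam : (Omega -> Prop) -> R) :
  (Omega -> Prop) -> R := fun F => INR k * lam F.

From Stdlib Require Import Reals Lra Lia Classical ClassicalEpsilon
  FunctionalExtensionality PropExtensionality List.
Open Scope R_scope.

(** Nonnegative finitely additive set functions (contents) have the lattice
    infimum [(mu /\ nu)(E) = inf_F mu(E /\ F) + nu(E \ F)] ([meet]).  For a
    content [m] the truncations [m /\ t lam] along a ladder of levels
    [t = i 2^-r], [i <= r 2^r], are summed with summable weights into a concave
    functional [Phi].  A pointwise inequality on reals, lifted to contents
    ([meet_lift]), shows that the midpoint concavity defect of [Phi] controls the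
    norm of [(a /\ k lam) - (b /\ k lam)] for every [k] ([ladder_dev], [Phi_gap]).
    Choosing [g n] in the convex hull [Gamma(n)] almost maximising [Phi] makes this
    defect vanish ([near_maximisers]), so for each [k] the truncations [g n /\ k lam]
    converge uniformly to a content [rho k].  Then [xi = lim_k rho k] is the sought
    content: [rho k = xi /\ k lam], [xi << lam] since [xi <= k lam + o(1)], and
    eventually [xi <= g n + e] uniformly, which gives the [liminf] bound. *)

Lemma set_ext {T : Type} (P Q : T -> Prop) : (forall x, P x <-> Q x) -> P = Q.
Proof.
  intro H; apply functional_extensionality; intro x.
  apply propositional_extensionality; auto.
Qed.

Definition sfull {O : Type} : O -> Prop := fun _ => True.
Definition sempty {O : Type} : O -> Prop := fun _ => False.
Definition scompl {O : Type} (F : O -> Prop) : O -> Prop := fun x => ~ F x.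
Definition sunion {O : Type} (F G : O -> Prop) : O -> Prop := fun x => F x \/ G x.
Definition sinter {O : Type} (E F : O -> Prop) : O -> Prop := fun x => E x /\ F x.
Definition sdiff {O : Type} (E F : O -> Prop) : O -> Prop := fun x => E x /\ ~ F x.

Definition content {O : Type} (A : (O -> Prop) -> Prop) (mu : (O -> Prop) -> R) : Prop :=
  fin_additive A mu /\ forall F, A F -> 0 <= mu F.

Section Algebra.
Context {O : Type} (A : (O -> Prop) -> Prop) (HA : is_algebra A).

Lemma A_full : A sfull.
Proof. exact (proj1 HA). Qed.

Lemma A_compl F : A F -> A (scompl F).
Proof. exact (proj1 (proj2 HA) F). Qed.

Lemma A_union F G : A F -> A G -> A (sunion F G).
Proof. exact (proj2 (proj2 HA) F G). Qed.

Lemma A_inter F G : A F -> A G -> A (sinter F G).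
Proof.
  intros HF HG.
  replace (sinter F G) with (scompl (sunion (scompl F) (scompl G))).
  - apply A_compl, A_union; apply A_compl; assumption.
  - apply set_ext; intro x; unfold scompl, sunion, sinter; tauto.
Qed.

Lemma A_diff F G : A F -> A G -> A (sdiff F G).
Proof.
  intros HF HG; replace (sdiff F G) with (sinter F (scompl G)).
  - apply A_inter, A_compl; assumption.
  - apply set_ext; intro x; unfold sdiff, sinter, scompl; tauto.
Qed.

Lemma A_empty : A sempty.
Proof.
  replace (@sempty O) with (scompl (@sfull O)); [apply A_compl, A_full|].
  apply set_ext; intro x; unfold scompl, sfull, sempty; tauto.
Qed.

Section Additive.
Variable mu : (O -> Prop) -> R.
Hypothesis Hmu : fin_additive A mu.

Lemma add_union F G : A F -> A G -> (forall x, F x -> G x -> False) ->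
  mu (sunion F G) = mu F + mu G.
Proof. exact (Hmu F G). Qed.

Lemma add_empty : mu sempty = 0.
Proof.
  pose proof (add_union sempty sempty A_empty A_empty (fun _ h _ => h)) as H.
  replace (sunion sempty sempty) with (@sempty O) in H; [lra|].
  apply set_ext; intro x; unfold sunion, sempty; tauto.
Qed.

Lemma add_split E F : A E -> A F -> mu E = mu (sinter E F) + mu (sdiff E F).
Proof.
  intros HE HF; rewrite <- add_union.
  - f_equal; apply set_ext; intro x; unfold sunion, sinter, sdiff; tauto.
  - apply A_inter; assumption.
  - apply A_diff; assumption.
  - unfold sinter, sdiff; tauto.
Qed.

Lemma add_compl F : A F -> mu sfull = mu F + mu (scompl F).
Proof.
  intro HF; rewrite (add_split sfull F A_full HF).
  f_equal; f_equal; apply set_ext; intro x; unfold sinter, sdiff, sfull, scompl; tauto.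
Qed.

End Additive.

Lemma add_lin (a b : R) mu nu : fin_additive A mu -> fin_additive A nu ->
  fin_additive A (fun F => a * mu F + b * nu F).
Proof. intros H1 H2 F G HF HG Hd; rewrite (H1 F G), (H2 F G); auto; ring. Qed.

Lemma add_sub mu nu : fin_additive A mu -> fin_additive A nu ->
  fin_additive A (fun F => mu F - nu F).
Proof. intros H1 H2 F G HF HG Hd; rewrite (H1 F G), (H2 F G); auto; ring. Qed.

Lemma content_mono mu E F : content A mu -> A E -> A F -> (forall x, F x -> E x) ->
  mu F <= mu E.
Proof.
  intros [Ha Hp] HE HF Hs; rewrite (add_split mu Ha E F HE HF).
  replace (sinter E F) with F by (apply set_ext; intro x; unfold sinter; firstorder).
  pose proof (Hp _ (A_diff E F HE HF)); lra.
Qed.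

Lemma content_le_full mu E : content A mu -> A E -> mu E <= mu sfull.
Proof. intros Hm HE; apply (content_mono mu); auto using A_full; now intros. Qed.

(** A content is bounded by its total mass. *)
Lemma content_is_ba mu : content A mu -> is_ba A mu.
Proof.
  intro Hm; split; [exact (proj1 Hm)|exists (mu sfull); intros F HF].
  pose proof (proj2 Hm F HF); pose proof (content_le_full mu F Hm HF).
  rewrite Rabs_right; lra.
Qed.

Lemma content_lin (a b : R) mu nu : 0 <= a -> 0 <= b -> content A mu -> content A nu ->
  content A (fun F => a * mu F + b * nu F).
Proof.
  intros Ha Hb [H1 H2] [H3 H4]; split; [apply add_lin; auto|].
  intros F HF; pose proof (H2 F HF); pose proof (H4 F HF); nra.
Qed.

End Algebra.

Definition choose_real (P : R -> Prop) : R := epsilon (inhabits 0) P.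

Lemma choose_real_spec (P : R -> Prop) : (exists x, P x) -> P (choose_real P).
Proof. apply epsilon_spec. Qed.

Lemma le_eps x y : (forall e, 0 < e -> x <= y + e) -> x <= y.
Proof.
  intro H; destruct (Rle_or_lt x y) as [h|h]; auto.
  specialize (H ((x - y) / 2)); lra.
Qed.

Lemma abs_le_bounds x a : Rabs x <= a -> - a <= x <= a.
Proof. unfold Rabs; destruct Rcase_abs; intros; lra. Qed.

Definition is_glb (S : R -> Prop) (m : R) : Prop :=
  (forall x, S x -> m <= x) /\ (forall y, (forall x, S x -> y <= x) -> y <= m).

Lemma glb_exists (S : R -> Prop) (b : R) :
  (exists x, S x) -> (forall x, S x -> b <= x) -> exists m, is_glb S m.
Proof.
  intros [x0 H0] Hb.
  destruct (completeness (fun y => S (- y))) as [l [Hl1 Hl2]].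
  - exists (- b); intros y Hy; apply Hb in Hy; lra.
  - exists (- x0); rewrite Ropp_involutive; auto.
  - exists (- l); split.
    + intros x Hx; assert (- x <= l) by (apply Hl1; rewrite Ropp_involutive; auto); lra.
    + intros y Hy; assert (l <= - y); [|lra].
      apply Hl2; intros z Hz; apply Hy in Hz; lra.
Qed.

Lemma glb_approx (S : R -> Prop) (m e : R) : is_glb S m -> 0 < e -> exists x, S x /\ x < m + e.
Proof.
  intros [_ Hm] He; apply NNPP; intro Hc.
  assert (m + e <= m); [|lra].
  apply Hm; intros x Hx; apply Rnot_lt_le; intro h; apply Hc; eauto.
Qed.

Definition limit (u : nat -> R) : R := choose_real (Un_cv u).

Lemma limit_spec (u : nat -> R) : (exists l, Un_cv u l) -> Un_cv u (limit u).
Proof. apply choose_real_spec. Qed.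

Lemma lim_le (u : nat -> R) l c : Un_cv u l -> (exists N, forall n, (N <= n)%nat -> u n <= c) -> l <= c.
Proof.
  intros H [N HN]; apply le_eps; intros e He; destruct (H e He) as [N' HN'].
  specialize (HN' (max N N') ltac:(lia)); specialize (HN (max N N') ltac:(lia)).
  unfold Rdist in HN'; apply Rabs_def2 in HN'; lra.
Qed.

Lemma lim_ge (u : nat -> R) l c : Un_cv u l -> (exists N, forall n, (N <= n)%nat -> c <= u n) -> c <= l.
Proof.
  intros H [N HN]; apply le_eps; intros e He; destruct (H e He) as [N' HN'].
  specialize (HN' (max N N') ltac:(lia)); specialize (HN (max N N') ltac:(lia)).
  unfold Rdist in HN'; apply Rabs_def2 in HN'; lra.
Qed.

(** * The lattice infimum of two contents *)

Definition meet {O : Type} (A : (O -> Prop) -> Prop) (mu nu : (O -> Prop) -> R)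
  (E : O -> Prop) : R :=
  choose_real (is_glb (fun v => exists F, A F /\ v = mu (sinter E F) + nu (sdiff E F))).

Section Meet.
Context {O : Type} (A : (O -> Prop) -> Prop) (HA : is_algebra A).
Variables mu nu : (O -> Prop) -> R.
Hypotheses (Hmu : content A mu) (Hnu : content A nu).

(** [meet] is the infimum defining it, which exists as the values are nonnegative. *)
Lemma meet_spec E : A E ->
  is_glb (fun v => exists F, A F /\ v = mu (sinter E F) + nu (sdiff E F)) (meet A mu nu E).
Proof.
  intro HE; unfold meet; apply choose_real_spec, (glb_exists _ 0).
  - exists (mu (sinter E sfull) + nu (sdiff E sfull)), sfull; split; [apply A_full; auto | reflexivity].
  - intros x [F [HF ->]].
    pose proof (proj2 Hmu _ (A_inter A HA E F HE HF)).
    pose proof (proj2 Hnu _ (A_diff A HA E F HE HF)); lra.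
Qed.

Lemma meet_le E F : A E -> A F -> meet A mu nu E <= mu (sinter E F) + nu (sdiff E F).
Proof. intros HE HF; apply (proj1 (meet_spec E HE)); eauto. Qed.

Lemma meet_approx E e : A E -> 0 < e ->
  exists F, A F /\ mu (sinter E F) + nu (sdiff E F) < meet A mu nu E + e.
Proof.
  intros HE He; destruct (glb_approx _ _ _ (meet_spec E HE) He) as [x [[F [HF ->]] Hx]].
  eauto.
Qed.

(** [mu /\ nu <= mu] and [mu /\ nu <= nu] (take [F = E], resp. [F] empty). *)
Lemma meet_le_l E : A E -> meet A mu nu E <= mu E.
Proof.
  intro HE; pose proof (meet_le E sfull HE (A_full A HA)) as H.
  replace (sinter E sfull) with E in H by (apply set_ext; intro; unfold sinter, sfull; tauto).
  replace (sdiff E sfull) with (@sempty O) in H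
    by (apply set_ext; intro; unfold sdiff, sfull, sempty; tauto).
  rewrite (add_empty A HA nu (proj1 Hnu)) in H; lra.
Qed.

Lemma meet_le_r E : A E -> meet A mu nu E <= nu E.
Proof.
  intro HE; pose proof (meet_le E sempty HE (A_empty A HA)) as H.
  replace (sdiff E sempty) with E in H by (apply set_ext; intro; unfold sdiff, sempty; tauto).
  replace (sinter E sempty) with (@sempty O) in H
    by (apply set_ext; intro; unfold sinter, sempty; tauto).
  rewrite (add_empty A HA mu (proj1 Hmu)) in H; lra.
Qed.

Lemma meet_le_min E : A E -> meet A mu nu E <= Rmin (mu E) (nu E).
Proof. intro HE; apply Rmin_glb; auto using meet_le_l, meet_le_r. Qed.

Lemma meet_greatest tau E : A E -> fin_additive A tau ->
  (forall F, A F -> tau F <= mu F) -> (forall F, A F -> tau F <= nu F) ->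
  tau E <= meet A mu nu E.
Proof.
  intros HE Ht H1 H2; apply (proj2 (meet_spec E HE)); intros x [F [HF ->]].
  rewrite (add_split A HA tau Ht E F HE HF).
  pose proof (H1 _ (A_inter A HA E F HE HF)); pose proof (H2 _ (A_diff A HA E F HE HF)); lra.
Qed.

(** [meet] is additive: near-optimal splits of disjoint sets combine. *)
Lemma meet_additive : fin_additive A (meet A mu nu).
Proof.
  intros E G HE HG Hd; change (fun x => E x \/ G x) with (sunion E G).
  assert (HEG : A (sunion E G)) by (apply A_union; auto).
  assert (Hsplit : forall F1 F2, A F1 -> A F2 ->
    meet A mu nu (sunion E G) <=
      (mu (sinter E F1) + nu (sdiff E F1)) + (mu (sinter G F2) + nu (sdiff G F2))).
  { intros F1 F2 HF1 HF2.
    pose proof (meet_le (sunion E G) (sunion (sinter E F1) (sinter G F2)) HEG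
      (A_union A HA _ _ (A_inter A HA E F1 HE HF1) (A_inter A HA G F2 HG HF2))) as H.
    replace (sinter (sunion E G) (sunion (sinter E F1) (sinter G F2)))
      with (sunion (sinter E F1) (sinter G F2)) in H
      by (apply set_ext; intro x; unfold sunion, sinter; specialize (Hd x); tauto).
    replace (sdiff (sunion E G) (sunion (sinter E F1) (sinter G F2)))
      with (sunion (sdiff E F1) (sdiff G F2)) in H
      by (apply set_ext; intro x; unfold sunion, sinter, sdiff; specialize (Hd x); tauto).
    rewrite (add_union A mu (proj1 Hmu)), (add_union A nu (proj1 Hnu)) in H;
      try lra; try (apply A_inter || apply A_diff; assumption);
      unfold sinter, sdiff; intros x [h _] [h' _]; eauto. }
  apply Rle_antisym.
  - apply le_eps; intros e He.
    destruct (meet_approx E (e / 2) HE) as [F1 [HF1 h1]]; [lra|].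
    destruct (meet_approx G (e / 2) HG) as [F2 [HF2 h2]]; [lra|].
    pose proof (Hsplit F1 F2 HF1 HF2); lra.
  - apply (proj2 (meet_spec _ HEG)); intros x [F [HF ->]].
    replace (sinter (sunion E G) F) with (sunion (sinter E F) (sinter G F))
      by (apply set_ext; intro x; unfold sunion, sinter; tauto).
    replace (sdiff (sunion E G) F) with (sunion (sdiff E F) (sdiff G F))
      by (apply set_ext; intro x; unfold sunion, sdiff; tauto).
    pose proof (meet_le E F HE HF); pose proof (meet_le G F HG HF).
    rewrite (add_union A mu (proj1 Hmu)), (add_union A nu (proj1 Hnu));
      try lra; try (apply A_inter || apply A_diff; assumption);
      unfold sinter, sdiff; intros y [h _] [h' _]; eauto.
Qed.

Lemma meet_content : content A (meet A mu nu).
Proof.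
  split; [exact meet_additive|].
  intros E HE; apply (proj2 (meet_spec E HE)); intros x [F [HF ->]].
  pose proof (proj2 Hmu _ (A_inter A HA E F HE HF)).
  pose proof (proj2 Hnu _ (A_diff A HA E F HE HF)); lra.
Qed.

Lemma meet_is_inf : is_inf A mu nu (meet A mu nu).
Proof.
  split; [apply (content_is_ba A HA), meet_content|split; [|split]].
  - intros F HF; apply meet_le_l; auto.
  - intros F HF; apply meet_le_r; auto.
  - intros tau [Ht _] H1 H2 E HE; apply meet_greatest; auto.
Qed.

End Meet.

Definition mid {O : Type} (a b : (O -> Prop) -> R) : (O -> Prop) -> R :=
  fun F => (a F + b F) / 2.

Section MeetOrder.
Context {O : Type} (A : (O -> Prop) -> Prop) (HA : is_algebra A).

Lemma meet_mono mu nu mu' nu' E : content A mu -> content A nu ->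
  content A mu' -> content A nu' -> A E ->
  (forall F, A F -> mu F <= mu' F) -> (forall F, A F -> nu F <= nu' F) ->
  meet A mu nu E <= meet A mu' nu' E.
Proof.
  intros Hm Hn Hm' Hn' HE H1 H2.
  apply (proj2 (meet_spec A HA mu' nu' Hm' Hn' E HE)); intros x [F [HF ->]].
  pose proof (meet_le A HA mu nu Hm Hn E F HE HF).
  pose proof (H1 _ (A_inter A HA E F HE HF)); pose proof (H2 _ (A_diff A HA E F HE HF)); lra.
Qed.

Lemma mid_comm (a b : (O -> Prop) -> R) : mid a b = mid b a.
Proof. apply functional_extensionality; intro F; unfold mid; f_equal; ring. Qed.

Lemma content_mid a b : content A a -> content A b -> content A (mid a b).
Proof.
  intros Ha Hb; replace (mid a b) with (fun F => / 2 * a F + / 2 * b F).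
  - apply content_lin; auto; lra.
  - apply functional_extensionality; intro F; unfold mid; field.
Qed.

Lemma meet_concave a b nu E : content A a -> content A b -> content A nu -> A E ->
  meet A a nu E + meet A b nu E <= 2 * meet A (mid a b) nu E.
Proof.
  intros Ha Hb Hn HE.
  assert ((meet A a nu E + meet A b nu E) / 2 <= meet A (mid a b) nu E); [|lra].
  apply (proj2 (meet_spec A HA _ nu (content_mid a b Ha Hb) Hn E HE)).
  intros x [F [HF ->]]; unfold mid.
  pose proof (meet_le A HA a nu Ha Hn E F HE HF).
  pose proof (meet_le A HA b nu Hb Hn E F HE HF); lra.
Qed.

End MeetOrder.

(** * Total variation *)

Section Variation.
Context {O : Type} (A : (O -> Prop) -> Prop) (HA : is_algebra A).

Definition disjoint_list (l : list (O -> Prop)) : Prop :=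
  forall i j, (i < length l)%nat -> (j < length l)%nat -> i <> j ->
    forall x, nth i l (fun _ => False) x -> nth j l (fun _ => False) x -> False.

Lemma disjoint_list_tail F l : disjoint_list (F :: l) -> disjoint_list l.
Proof. intros H i j Hi Hj Hij x h1 h2; apply (H (S i) (S j)) with x; simpl; auto; lia. Qed.

Lemma disjoint_list_head F l : disjoint_list (F :: l) ->
  forall G, In G l -> forall x, F x -> G x -> False.
Proof.
  intros H G HG x h1 h2; destruct (In_nth l G (fun _ => False) HG) as [j [Hj Hn]].
  apply (H 0%nat (S j)) with x; simpl; try lia; auto; rewrite Hn; auto.
Qed.

(** Hahn decomposition of a finite partition: [sum |sigma F|] is [sigma P - sigma N]
    where [P] gathers the pieces of nonnegative mass and [N] the others. *)
Lemma sum_abs_split sigma l : fin_additive A sigma ->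
  (forall F, In F l -> A F) -> disjoint_list l ->
  exists P N, A P /\ A N /\ (forall x, P x \/ N x <-> exists F, In F l /\ F x) /\
    (forall x, P x -> N x -> False) /\ sum_abs sigma l = sigma P - sigma N.
Proof.
  intros Hs; induction l as [|F l IH]; intros Hl Hd.
  - exists sempty, sempty; split; [|split; [|split; [|split]]].
    + apply A_empty; assumption.
    + apply A_empty; assumption.
    + intro x; split; [intros [h|h]; destruct h|intros [F [h _]]; destruct h].
    + intros x h; destruct h.
    + simpl; rewrite (add_empty A HA sigma Hs); ring.
  - assert (HF : A F) by (apply Hl; left; auto).
    destruct IH as [P [N [HP [HN [Hc [Hpn Hsum]]]]]];
      [intros G hG; apply Hl; right; auto | eapply disjoint_list_tail; eauto |].
    assert (HdF : forall x, F x -> P x \/ N x -> False).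
    { intros x hx hpn; apply Hc in hpn; destruct hpn as [G [hG hGx]].
      eapply disjoint_list_head; eauto. }
    assert (Hcov : forall x, (exists G, In G (F :: l) /\ G x) <-> F x \/ P x \/ N x).
    { intro x; split.
      - intros [G [[<-|hG] hx]]; [left; auto|right; apply Hc; eauto].
      - intros [h|h]; [exists F; split; [left|]; auto|].
        destruct (proj1 (Hc x) h) as [G [hG hx]]; exists G; split; [right|]; auto. }
    change (sum_abs sigma (F :: l)) with (Rabs (sigma F) + sum_abs sigma l); rewrite Hsum.
    destruct (Rle_dec 0 (sigma F)) as [h0|h0].
    + exists (sunion F P), N; split; [apply A_union; assumption|split; [assumption|split; [|split]]].
      * intro x; rewrite Hcov; unfold sunion; tauto.
      * intros x [h|h] hn; [eapply HdF|eapply Hpn]; eauto.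
      * rewrite (add_union A sigma Hs F P HF HP); [rewrite Rabs_right by lra; ring|].
        intros x h1 h2; eapply HdF; eauto.
    + exists P, (sunion F N); split; [assumption|split; [apply A_union; assumption|split; [|split]]].
      * intro x; rewrite Hcov; unfold sunion; tauto.
      * intros x h [hn|hn]; [eapply HdF|eapply Hpn]; eauto.
      * rewrite (add_union A sigma Hs F N HF HN); [rewrite Rabs_left by lra; ring|].
        intros x h1 h2; eapply HdF; eauto.
Qed.

(** [dev_le sigma c] bounds [sigma F - sigma (~F)] uniformly; for additive [sigma]
    this is [||sigma|| <= c]. *)
Definition dev_le (sigma : (O -> Prop) -> R) (c : R) : Prop :=
  forall F, A F -> sigma F - sigma (scompl F) <= c.

(** The norm bound follows from the Hahn decomposition of each partition. *)
Lemma norm_le_of_dev sigma c : fin_additive A sigma -> dev_le sigma c -> norm_le A sigma c.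
Proof.
  intros Hs HD l [Hl [Hd Hc]].
  destruct (sum_abs_split sigma l Hs Hl Hd) as [P [N [HP [HN [Hc' [Hpn ->]]]]]].
  replace N with (scompl P); [apply HD; auto|].
  apply set_ext; intro x; unfold scompl; split.
  - intro h; assert (P x \/ N x) by (apply Hc', Hc; exact I); tauto.
  - intros h h'; eapply Hpn; eauto.
Qed.

Lemma dev_le_abs sigma c : fin_additive A sigma -> dev_le sigma c ->
  forall E, A E -> Rabs (sigma E) <= c.
Proof.
  intros Hs HD E HE.
  pose proof (HD _ (A_full A HA)) as h1; pose proof (HD _ (A_empty A HA)) as h2.
  replace (scompl (@sfull O)) with (@sempty O) in h1
    by (apply set_ext; intro; unfold scompl, sfull, sempty; tauto).
  replace (scompl (@sempty O)) with (@sfull O) in h2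
    by (apply set_ext; intro; unfold scompl, sfull, sempty; tauto).
  pose proof (HD E HE) as h3; pose proof (HD _ (A_compl A HA E HE)) as h4.
  replace (scompl (scompl E)) with E in h4 by (apply set_ext; intro; unfold scompl; tauto).
  pose proof (add_compl A HA sigma Hs E HE); rewrite (add_empty A HA sigma Hs) in h1, h2.
  apply Rabs_le; lra.
Qed.

Lemma tv_le_content nu E : content A nu -> A E -> tv_le A nu E (nu E).
Proof.
  intros Hn HE l [Hl [Hd Hc]].
  destruct (sum_abs_split nu l (proj1 Hn) Hl Hd) as [P [N [HP [HN [Hc' [_ ->]]]]]].
  pose proof (proj2 Hn N HN).
  assert (nu P <= nu E); [|lra].
  apply (content_mono A HA); auto; intros x hx; apply Hc, Hc'; auto.
Qed.

(** [|sigma(E)| <= |sigma|(E)] (the one-piece partition). *)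
Lemma abs_le_tv sigma E c : A E -> tv_le A sigma E c -> Rabs (sigma E) <= c.
Proof.
  intros HE H; specialize (H (E :: nil)); simpl in H; rewrite Rplus_0_r in H; apply H.
  split; [|split].
  - intros F [<-|[]]; auto.
  - intros i j Hi Hj Hij; simpl in Hi, Hj; lia.
  - intro x; split; [intro h; exists E; split; [left|]; auto|].
    intros [F [[<-|[]] h]]; auto.
Qed.

Lemma content_abs_cont xi lam : content A xi -> content A lam ->
  (forall e, 0 < e -> exists c, 0 <= c /\ forall E, A E -> xi E <= c * lam E + e) ->
  abs_cont A xi lam.
Proof.
  intros Hx Hl Hdom e He; destruct (Hdom (e / 2) ltac:(lra)) as [c [Hc Hxc]].
  exists (e / (2 * (c + 1))); split; [apply Rdiv_lt_0_compat; lra|].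
  intros E HE [t [Ht Htv]]; exists (xi E); split; [|apply tv_le_content; auto].
  pose proof (abs_le_tv lam E t HE Htv); pose proof (Rle_abs (lam E)); pose proof (Hxc E HE).
  assert (c * lam E <= c * (e / (2 * (c + 1)))) by (apply Rmult_le_compat_l; lra).
  assert (c * (e / (2 * (c + 1))) < e / 2); [|lra].
  apply Rmult_lt_reg_r with (2 * (c + 1)); [lra|].
  replace (c * (e / (2 * (c + 1))) * (2 * (c + 1))) with (c * e) by (field; lra); nra.
Qed.

End Variation.

(** * Truncations of a content along a ladder of levels *)

Lemma sum_nonneg (f : nat -> R) N : (forall i, (i <= N)%nat -> 0 <= f i) -> 0 <= sum_f_R0 f N.
Proof.
  intro H; induction N as [|N IH]; simpl; [apply H; lia|].
  pose proof (H (S N) (le_n _)); assert (0 <= sum_f_R0 f N) by (apply IH; intros; apply H; lia).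
  lra.
Qed.

Lemma sum_scal c (f : nat -> R) N : sum_f_R0 (fun i => c * f i) N = c * sum_f_R0 f N.
Proof. induction N as [|N IH]; simpl; [|rewrite IH]; ring. Qed.

Lemma sum_comb3 (x y z : nat -> R) N :
  sum_f_R0 (fun i => 4 * x i - 2 * y i - 2 * z i) N =
  4 * sum_f_R0 x N - 2 * sum_f_R0 y N - 2 * sum_f_R0 z N.
Proof. induction N as [|N IH]; simpl; [|rewrite IH]; ring. Qed.

Lemma term_le_sum (f : nat -> R) N i : (forall j, (j <= N)%nat -> 0 <= f j) -> (i <= N)%nat ->
  f i <= sum_f_R0 f N.
Proof.
  intros H Hi; induction N as [|N IH]; simpl.
  - replace i with 0%nat by lia; lra.
  - destruct (Nat.eq_dec i (S N)) as [->|h].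
    + pose proof (sum_nonneg f N (fun j hj => H j ltac:(lia))); lra.
    + pose proof (IH (fun j hj => H j ltac:(lia)) ltac:(lia)); pose proof (H (S N) (le_n _)); lra.
Qed.

Lemma floor_exists z s : 0 <= z -> 0 < s -> exists i : nat, INR i * s <= z < INR (S i) * s.
Proof.
  intros Hz Hs; destruct (INR_unbounded (z / s)) as [n Hn].
  assert (Hzn : z < INR n * s).
  { apply Rmult_lt_compat_r with (r := s) in Hn; auto.
    unfold Rdiv in Hn; rewrite Rmult_assoc, Rinv_l in Hn; lra. }
  clear Hn; induction n as [|n IH]; [simpl in Hzn; lra|].
  destruct (Rlt_dec z (INR n * s)) as [h|h]; auto; exists n; split; lra.
Qed.

Lemma min_mid_concave x y t : 2 * Rmin x t + 2 * Rmin y t <= 4 * Rmin ((x + y) / 2) t.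
Proof. unfold Rmin; repeat destruct Rle_dec; lra. Qed.

(** Real-number core of the argument: truncating at level [J d l] changes the
    difference of two numbers by at most one ladder step [2 d l] plus the
    concavity defect of the truncations [min (.) (i d l)], [i <= N]. *)
Lemma min_ladder_ineq x y l d J N : 0 <= x -> 0 <= y -> 0 <= l -> 0 < d -> (J <= N)%nat ->
  Rmin x (INR J * d * l) - Rmin y (INR J * d * l) <=
  2 * d * l + sum_f_R0 (fun i => 4 * Rmin ((x + y) / 2) (INR i * d * l)
    - 2 * Rmin x (INR i * d * l) - 2 * Rmin y (INR i * d * l)) N.
Proof.
  intros Hx Hy Hl Hd HJ.
  set (h := fun i => 4 * Rmin ((x + y) / 2) (INR i * d * l)
    - 2 * Rmin x (INR i * d * l) - 2 * Rmin y (INR i * d * l)).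
  assert (Hh : forall i, (i <= N)%nat -> 0 <= h i)
    by (intros i _; unfold h; pose proof (min_mid_concave x y (INR i * d * l)); lra).
  set (K := INR J * d * l); set (u := Rmin x K).
  assert (Hdl : 0 <= d * l) by (apply Rmult_le_pos; lra).
  destruct (Rle_dec (u - Rmin y K) (2 * d * l)) as [hc|hc].
  { pose proof (sum_nonneg h N Hh); lra. }
  assert (HuK : u <= K) by apply Rmin_r.
  assert (Hyk : Rmin y K = y).
  { apply Rmin_left; apply Rnot_lt_le; intro hy; apply hc; rewrite Rmin_right; lra. }
  rewrite Hyk in hc |- *.
  assert (Hux : u <= x) by apply Rmin_l.
  assert (Hu0 : 0 <= u) by (apply Rmin_glb; unfold K; [lra|]; pose proof (pos_INR J); nra).
  assert (Hlp : 0 < l) by (destruct Hl as [Hl|<-]; auto; unfold K in HuK; nra).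
  (* the ladder level just below the midpoint of [u] and [y] witnesses the bound *)
  set (m := (u + y) / 2).
  destruct (floor_exists m (d * l)) as [i [Hi1 Hi2]]; [unfold m; lra|nra|].
  rewrite S_INR in Hi2.
  assert (HiJ : (i <= J)%nat).
  { apply INR_le, Rmult_le_reg_r with (d * l); [nra|].
    unfold K in HuK; unfold m in Hi1; nra. }
  assert (Hhi : h i >= u - y - 2 * d * l).
  { unfold h; set (t := INR i * d * l).
    assert (Ht1 : t <= m) by (unfold t; rewrite Rmult_assoc; auto).
    assert (Ht2 : m - d * l < t) by (unfold t; rewrite Rmult_assoc; lra).
    rewrite (Rmin_right x t), (Rmin_left y t), (Rmin_right _ t); unfold m in *; lra. }
  pose proof (term_le_sum h N i Hh ltac:(lia)); lra.
Qed.

Definition rscale {O : Type} (t : R) (lam : (O -> Prop) -> R) : (O -> Prop) -> R :=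
  fun F => t * lam F.

Definition ladder {O : Type} (A : (O -> Prop) -> Prop) (m lam : (O -> Prop) -> R)
  (d : R) (N : nat) (E : O -> Prop) : R :=
  sum_f_R0 (fun i => meet A m (rscale (INR i * d) lam) E) N.

Definition ladder_gap {O : Type} (A : (O -> Prop) -> Prop) (a b lam : (O -> Prop) -> R)
  (d : R) (N : nat) (E : O -> Prop) : R :=
  4 * ladder A (mid a b) lam d N E - 2 * ladder A a lam d N E - 2 * ladder A b lam d N E.

Section Ladder.
Context {O : Type} (A : (O -> Prop) -> Prop) (HA : is_algebra A).

Lemma content_rscale t lam : 0 <= t -> content A lam -> content A (rscale t lam).
Proof.
  intros Ht [H1 H2]; split.
  - intros F G HF HG Hd; unfold rscale; rewrite (H1 F G); auto; ring.
  - intros F HF; unfold rscale; pose proof (H2 F HF); nra.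
Qed.

Lemma content_ladder_step lam (d : R) (i : nat) : 0 <= d -> content A lam ->
  content A (rscale (INR i * d) lam).
Proof. intros Hd Hl; apply content_rscale; auto; pose proof (pos_INR i); nra. Qed.

Lemma min_split m1 m2 E F : content A m1 -> content A m2 -> A E -> A F ->
  Rmin (m1 (sinter E F)) (m2 (sinter E F)) + Rmin (m1 (sdiff E F)) (m2 (sdiff E F))
  <= Rmin (m1 E) (m2 E).
Proof.
  intros H1 H2 HE HF.
  rewrite (add_split A HA m1 (proj1 H1) E F HE HF), (add_split A HA m2 (proj1 H2) E F HE HF).
  unfold Rmin; repeat destruct Rle_dec; lra.
Qed.

Lemma meet_lift_step L Y w m1 m2 : content A m1 -> content A m2 -> 0 <= w ->
  fin_additive A L ->
  (forall E F, A E -> A F -> Y (sinter E F) + Y (sdiff E F) <= Y E) ->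
  (forall E, A E -> L E <= Y E + w * Rmin (m1 E) (m2 E)) ->
  forall E, A E -> L E <= Y E + w * meet A m1 m2 E.
Proof.
  intros H1 H2 Hw HL HY Hb E HE; apply le_eps; intros e He.
  destruct (meet_approx A HA m1 m2 H1 H2 E (e / (w + 1)) HE) as [F [HF hF]];
    [apply Rdiv_lt_0_compat; lra|].
  rewrite (add_split A HA L HL E F HE HF).
  pose proof (Hb _ (A_inter A HA E F HE HF)) as b1; pose proof (Hb _ (A_diff A HA E F HE HF)) as b2.
  pose proof (HY E F HE HF).
  pose proof (Rmin_l (m1 (sinter E F)) (m2 (sinter E F))).
  pose proof (Rmin_r (m1 (sdiff E F)) (m2 (sdiff E F))).
  assert (w * (e / (w + 1)) <= e).
  { unfold Rdiv; rewrite <- Rmult_assoc; apply Rmult_le_reg_r with (w + 1); [lra|].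
    rewrite Rmult_assoc, Rinv_l by lra; nra. }
  nra.
Qed.

Lemma meet_lift X (w : nat -> R) (m1 m2 : nat -> (O -> Prop) -> R) N :
  (forall j, 0 <= w j) -> (forall j, content A (m1 j)) -> (forall j, content A (m2 j)) ->
  fin_additive A X -> forall L, fin_additive A L ->
  (forall E, A E -> L E <= X E + sum_f_R0 (fun j => w j * Rmin (m1 j E) (m2 j E)) N) ->
  forall E, A E -> L E <= X E + sum_f_R0 (fun j => w j * meet A (m1 j) (m2 j) E) N.
Proof.
  intros Hw H1 H2 HX; induction N as [|N IH]; intros L HL Hb.
  - simpl; apply (meet_lift_step L X); auto.
    intros E F HE HF; rewrite (add_split A HA X HX E F HE HF); lra.
  - set (L' := fun E => L E - w (S N) * meet A (m1 (S N)) (m2 (S N)) E).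
    assert (HL' : fin_additive A L')
      by (intros F G HF HG Hd; unfold L';
          rewrite (HL F G), (meet_additive A HA _ _ (H1 (S N)) (H2 (S N)) F G); auto; ring).
    assert (Hb' : forall E, A E ->
      L' E <= X E + sum_f_R0 (fun j => w j * Rmin (m1 j E) (m2 j E)) N).
    { intros E HE; unfold L'.
      cut (L E <= (X E + sum_f_R0 (fun j => w j * Rmin (m1 j E) (m2 j E)) N)
                  + w (S N) * meet A (m1 (S N)) (m2 (S N)) E); [lra|].
      revert E HE; apply meet_lift_step; auto.
      - intros E F HE HF; rewrite (add_split A HA X HX E F HE HF).
        assert (sum_f_R0 (fun j => w j * Rmin (m1 j (sinter E F)) (m2 j (sinter E F))) N
          + sum_f_R0 (fun j => w j * Rmin (m1 j (sdiff E F)) (m2 j (sdiff E F))) N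
          <= sum_f_R0 (fun j => w j * Rmin (m1 j E) (m2 j E)) N); [|lra].
        rewrite <- plus_sum; apply sum_Rle; intros j _; rewrite <- Rmult_plus_distr_l.
        apply Rmult_le_compat_l; auto; apply min_split; auto.
      - intros E HE; pose proof (Hb E HE); simpl in *; lra. }
    intros E HE; pose proof (IH L' HL' Hb' E HE); unfold L' in *; simpl; lra.
Qed.

Section Gap.
Variables a b lam : (O -> Prop) -> R.
Hypotheses (Ha : content A a) (Hb : content A b) (Hl : content A lam).
Variable d : R.
Hypothesis Hd : 0 < d.

(** The ladders and their gap are additive, and the gap is nonnegative by concavity of [meet]. *)
Lemma ladder_additive m N : content A m -> fin_additive A (ladder A m lam d N).
Proof.
  intros Hm F G HF HG Hdisj; unfold ladder; rewrite <- plus_sum; apply sum_eq; intros i _.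
  apply meet_additive; auto; apply content_ladder_step; auto; lra.
Qed.

Lemma ladder_gap_additive N : fin_additive A (ladder_gap A a b lam d N).
Proof.
  intros F G HF HG Hdisj; unfold ladder_gap.
  pose proof (content_mid A a b Ha Hb).
  rewrite !(ladder_additive _ N); auto; ring.
Qed.

Lemma ladder_gap_nonneg N E : A E -> 0 <= ladder_gap A a b lam d N E.
Proof.
  intro HE.
  assert (ladder A a lam d N E + ladder A b lam d N E <= 2 * ladder A (mid a b) lam d N E);
    [|unfold ladder_gap; lra].
  unfold ladder; rewrite <- plus_sum, scal_sum; apply sum_Rle; intros i _.
  pose proof (meet_concave A HA a b (rscale (INR i * d) lam) E Ha Hb
    (content_ladder_step lam d i (Rlt_le _ _ Hd) Hl) HE); lra.
Qed.

(** Measure version of [min_ladder_ineq], obtained by lifting it with [meet_lift]. *)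
Lemma ladder_ineq J N E : (J <= N)%nat -> A E ->
  meet A a (rscale (INR J * d) lam) E - meet A b (rscale (INR J * d) lam) E <=
  2 * d * lam E + ladder_gap A a b lam d N E.
Proof.
  intros HJ HE.
  assert (Hstep := fun i => content_ladder_step lam d i (Rlt_le _ _ Hd) Hl).
  assert (Hab := content_mid A a b Ha Hb).
  set (L := fun E => meet A a (rscale (INR J * d) lam) E
      + 2 * ladder A a lam d N E + 2 * ladder A b lam d N E).
  assert (HL : fin_additive A L).
  { intros F G HF HG Hdisj; unfold L.
    rewrite (meet_additive A HA a _ Ha (Hstep J) F G), !(ladder_additive _ N); auto; ring. }
  (* the family: [b /\ J d lam] with weight 1, then [mid a b /\ i d lam] with weight 4 *)
  set (w := fun j : nat => match j with 0%nat => 1 | S _ => 4 end).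
  set (m1 := fun j : nat => match j with 0%nat => b | S _ => mid a b end).
  set (m2 := fun j : nat => match j with 0%nat => rscale (INR J * d) lam
                                    | S i => rscale (INR i * d) lam end).
  assert (Hsum : forall f : nat -> R, sum_f_R0 f (S N) = f 0%nat + sum_f_R0 (fun i => f (S i)) N)
    by (intro f; apply decomp_sum; lia).
  assert (Hlift : L E <= 2 * d * lam E
      + sum_f_R0 (fun j => w j * meet A (m1 j) (m2 j) E) (S N)).
  2:{ rewrite Hsum in Hlift; subst w m1 m2; cbv beta iota in Hlift.
      unfold L, ladder_gap, ladder in *; rewrite sum_scal in Hlift; lra. }
  apply (meet_lift (fun E => 2 * d * lam E)); auto.
  - intros [|j]; unfold w; lra.
  - intros [|j]; unfold m1; auto.
  - intros [|j]; unfold m2; auto.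
  - exact (proj1 (content_rscale (2 * d) lam ltac:(lra) Hl)).
  - intros E' HE'.
    pose proof (min_ladder_ineq (a E') (b E') (lam E') d J N
      (proj2 Ha E' HE') (proj2 Hb E' HE') (proj2 Hl E' HE') Hd HJ) as Hreal.
    rewrite sum_comb3 in Hreal; rewrite Hsum; subst w m1 m2; cbv beta iota; rewrite sum_scal.
    assert (meet A a (rscale (INR J * d) lam) E' <= Rmin (a E') (INR J * d * lam E'))
      by exact (meet_le_min A HA _ _ Ha (Hstep J) E' HE').
    assert (Hsa : ladder A a lam d N E' <= sum_f_R0 (fun i => Rmin (a E') (INR i * d * lam E')) N)
      by (apply sum_Rle; intros i _; exact (meet_le_min A HA _ _ Ha (Hstep i) E' HE')).
    assert (Hsb : ladder A b lam d N E' <= sum_f_R0 (fun i => Rmin (b E') (INR i * d * lam E')) N)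
      by (apply sum_Rle; intros i _; exact (meet_le_min A HA _ _ Hb (Hstep i) E' HE')).
    unfold L, mid, rscale in *; lra.
Qed.

End Gap.
Lemma ladder_dev a b lam d J N : content A a -> content A b -> content A lam -> 0 < d ->
  (J <= N)%nat ->
  dev_le A (fun F => meet A a (rscale (INR J * d) lam) F - meet A b (rscale (INR J * d) lam) F)
    (2 * d * lam sfull + ladder_gap A a b lam d N sfull).
Proof.
  intros Ha Hb Hl Hd HJ F HF.
  assert (HcF := A_compl A HA F HF).
  pose proof (ladder_ineq a b lam Ha Hb Hl d Hd J N F HJ HF).
  pose proof (ladder_ineq b a lam Hb Ha Hl d Hd J N (scompl F) HJ HcF).
  replace (ladder_gap A b a lam d N) with (ladder_gap A a b lam d N) in *
    by (unfold ladder_gap; rewrite mid_comm; apply functional_extensionality; intro; ring).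
  rewrite (add_compl A HA lam (proj1 Hl) F HF),
    (add_compl A HA _ (ladder_gap_additive a b lam Ha Hb Hl d Hd N) F HF); lra.
Qed.

End Ladder.

(** * A concave functional controlling all truncations *)

(** At precision [r] the ladder has step [2^-r] and height [r]. *)
Definition step (r : nat) : R := (/ 2) ^ r.
Definition height (r : nat) : nat := (r * 2 ^ r)%nat.
Definition weight (r : nat) : R := / (INR (S (height r)) * 2 ^ r).

Definition Phi_term {O : Type} (A : (O -> Prop) -> Prop) (lam m : (O -> Prop) -> R)
  (r : nat) : R :=
  weight r * ladder A m lam (step r) (height r) sfull.

Definition Phi {O : Type} (A : (O -> Prop) -> Prop) (lam m : (O -> Prop) -> R) : R :=
  choose_real (infinite_sum (Phi_term A lam m)).

(** Arithmetic of steps and weights; level [k] is the rung [k 2^r] at precision [r]. *)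
Lemma step_pos r : 0 < step r.
Proof. apply pow_lt; lra. Qed.

Lemma weight_pos r : 0 < weight r.
Proof. apply Rinv_0_lt_compat, Rmult_lt_0_compat; [apply lt_0_INR; lia|apply pow_lt; lra]. Qed.

Lemma step_le_inv r : step r <= / INR (S r).
Proof.
  unfold step; rewrite pow_inv; apply Rinv_le_contravar; [apply lt_0_INR; lia|].
  induction r as [|r IH]; [simpl; lra|].
  rewrite !S_INR in *; simpl; pose proof (pos_INR r); lra.
Qed.

Lemma step_height (k r : nat) : INR (k * 2 ^ r) * step r = INR k.
Proof.
  unfold step; rewrite mult_INR, pow_INR, pow_inv; replace (INR 2) with 2 by (simpl; ring).
  field; apply pow_nonzero; lra.
Qed.

Lemma geometric_le_2 K : sum_f_R0 (fun r => (/ 2) ^ r) K <= 2.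
Proof.
  rewrite tech3 by lra.
  assert (0 < (/ 2) ^ S K) by (apply pow_lt; lra).
  unfold Rdiv; replace (/ (1 - / 2)) with 2 by field; lra.
Qed.

Lemma cv_scal c (u : nat -> R) l : Un_cv u l -> Un_cv (fun n => c * u n) (c * l).
Proof.
  intro H; apply (CV_mult (fun _ => c)); auto.
  intros e He; exists 0%nat; intros n _; rewrite Rdist_eq; lra.
Qed.

Section Functional.
Context {O : Type} (A : (O -> Prop) -> Prop) (HA : is_algebra A).
Variable lam : (O -> Prop) -> R.
Hypothesis Hl : content A lam.

(** The [r]-th term is at most [2^-r m(Omega)], so the series converges. *)
Lemma Phi_term_bounds m r : content A m -> 0 <= Phi_term A lam m r <= m sfull * (/ 2) ^ r.
Proof.
  intro Hm; unfold Phi_term.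
  assert (Hstep := fun i => content_ladder_step A lam (step r) i (Rlt_le _ _ (step_pos r)) Hl).
  assert (Hw := weight_pos r).
  assert (H0 : 0 <= ladder A m lam (step r) (height r) sfull)
    by (apply sum_nonneg; intros i _; apply (proj2 (meet_content A HA m _ Hm (Hstep i))),
        A_full; auto).
  assert (H1 : ladder A m lam (step r) (height r) sfull <= INR (S (height r)) * m sfull).
  { unfold ladder; replace (INR (S (height r)) * m sfull)
      with (sum_f_R0 (fun _ => m sfull) (height r))
      by (clear; induction (height r) as [|n IH]; [simpl; ring|rewrite tech5, IH, !S_INR; ring]).
    apply sum_Rle; intros i _; apply meet_le_l; auto; apply A_full; auto. }
  split; [nra|].
  apply Rle_trans with (weight r * (INR (S (height r)) * m sfull)); [nra|].
  right; unfold weight; rewrite pow_inv; field.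
  split; [apply pow_nonzero; lra|apply not_0_INR; lia].
Qed.

Lemma Phi_partial_le m K : content A m -> sum_f_R0 (Phi_term A lam m) K <= 2 * m sfull.
Proof.
  intro Hm; pose proof (geometric_le_2 K); pose proof (proj2 Hm sfull (A_full A HA)).
  apply Rle_trans with (m sfull * sum_f_R0 (fun r => (/ 2) ^ r) K); [|nra].
  rewrite <- sum_scal; apply sum_Rle; intros r _; apply Phi_term_bounds; auto.
Qed.

Lemma Phi_spec m : content A m -> infinite_sum (Phi_term A lam m) (Phi A lam m).
Proof.
  intro Hm; unfold Phi; apply choose_real_spec.
  destruct (growing_cv (sum_f_R0 (Phi_term A lam m))) as [l Hlim]; [| |exists l; exact Hlim].
  - intro n; simpl; pose proof (Phi_term_bounds m (S n) Hm); lra.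
  - exists (2 * m sfull); intros x [K ->]; apply Phi_partial_le; auto.
Qed.

Lemma Phi_bounds m : content A m -> 0 <= Phi A lam m <= 2 * m sfull.
Proof.
  intro Hm; pose proof (Phi_spec m Hm) as Hs; split.
  - apply (lim_ge _ _ _ Hs); exists 0%nat; intros n _.
    apply sum_nonneg; intros r _; apply Phi_term_bounds; auto.
  - apply (lim_le _ _ _ Hs); exists 0%nat; intros K _; apply Phi_partial_le; auto.
Qed.

Lemma Phi_gap a b r : content A a -> content A b ->
  weight r * ladder_gap A a b lam (step r) (height r) sfull <=
  4 * Phi A lam (mid a b) - 2 * Phi A lam a - 2 * Phi A lam b.
Proof.
  intros Ha Hb; assert (Hab := content_mid A a b Ha Hb).
  set (gap := fun s => weight s * ladder_gap A a b lam (step s) (height s) sfull).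
  assert (Hgap : forall s, gap s =
    4 * Phi_term A lam (mid a b) s - 2 * Phi_term A lam a s - 2 * Phi_term A lam b s)
    by (intro s; unfold gap, ladder_gap, Phi_term; ring).
  assert (Hcv : infinite_sum gap (4 * Phi A lam (mid a b) - 2 * Phi A lam a - 2 * Phi A lam b)).
  { apply (Un_cv_ext (fun K => 4 * sum_f_R0 (Phi_term A lam (mid a b)) K
      - 2 * sum_f_R0 (Phi_term A lam a) K - 2 * sum_f_R0 (Phi_term A lam b) K)).
    - intro K; rewrite (sum_eq _ _ K (fun s _ => Hgap s)), sum_comb3; reflexivity.
    - apply CV_minus; [apply CV_minus|]; apply cv_scal, Phi_spec; auto. }
  assert (Hnn : forall s, 0 <= gap s)
    by (intro s; apply Rmult_le_pos; [apply Rlt_le, weight_pos|];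
        apply ladder_gap_nonneg; auto using step_pos; apply A_full; auto).
  apply Rle_trans with (sum_f_R0 gap r); [apply (term_le_sum gap); auto|].
  apply sum_incr; auto.
Qed.

End Functional.

(** * Near-maximisers of a concave functional on shrinking convex sets *)

Lemma inv_succ_small e : 0 < e -> exists N, forall n, (N <= n)%nat -> / INR (S n) < e.
Proof.
  intro He; destruct (INR_unbounded (/ e)) as [N HN]; exists N; intros n Hn.
  assert (INR N <= INR n) by (apply le_INR; auto).
  assert (Hpos : 0 < INR (S n)) by (apply lt_0_INR; lia).
  rewrite <- (Rinv_inv e); apply Rinv_lt_contravar.
  - apply Rmult_lt_0_compat; auto; apply Rinv_0_lt_compat; auto.
  - rewrite S_INR; lra.
Qed.

Section NearMaximisers.
Variables (X : Type) (midp : X -> X -> X) (Gam : nat -> X -> Prop) (Psi : X -> R) (B : R).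
Hypotheses
  (Gam_nonempty : forall n, exists x, Gam n x)
  (Gam_decr : forall n n' x, (n <= n')%nat -> Gam n' x -> Gam n x)
  (Gam_midp : forall n x y, Gam n x -> Gam n y -> Gam n (midp x y))
  (Psi_bounds : forall n x, Gam n x -> 0 <= Psi x <= B).

Lemma shrinking_suprema : exists (V : nat -> R) (L : R),
  (forall n x, Gam n x -> Psi x <= V n) /\
  (forall n, exists x, Gam n x /\ V n - / INR (S n) < Psi x) /\
  Un_cv V L /\ (forall n, L <= V n).
Proof.
  assert (HV : forall n, { v | is_lub (fun y => exists x, Gam n x /\ y = Psi x) v }).
  { intro n; apply completeness.
    - exists B; intros y [x [Hx ->]]; apply (Psi_bounds n x Hx).
    - destruct (Gam_nonempty n) as [x Hx]; eauto. }
  set (V := fun n => proj1_sig (HV n)).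
  assert (HVub : forall n x, Gam n x -> Psi x <= V n)
    by (intros n x Hx; apply (proj1 (proj2_sig (HV n))); eauto).
  assert (HVdec : Un_decreasing V).
  { intro n; apply (proj2 (proj2_sig (HV (S n)))); intros y [x [Hx ->]].
    apply HVub, (Gam_decr n (S n)); auto. }
  assert (Hlb : has_lb V).
  { exists 0; intros y [n ->]; unfold opp_seq; destruct (Gam_nonempty n) as [x Hx].
    pose proof (HVub n x Hx); pose proof (Psi_bounds n x Hx); lra. }
  destruct (decreasing_cv V HVdec Hlb) as [L HL].
  exists V, L; split; [exact HVub|split; [|split; [exact HL|exact (decreasing_ineq V L HVdec HL)]]].
  intro n; apply NNPP; intro hc.
  assert (V n <= V n - / INR (S n)).
  { apply (proj2 (proj2_sig (HV n))); intros y [x [Hx ->]].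
    apply Rnot_lt_le; intro hlt; apply hc; eauto. }
  assert (0 < / INR (S n)) by (apply Rinv_0_lt_compat, lt_0_INR; lia); lra.
Qed.

Lemma near_maximisers : exists g : nat -> X, (forall n, Gam n (g n)) /\
  forall e, 0 < e -> exists N, forall n n', (N <= n)%nat -> (N <= n')%nat ->
    4 * Psi (midp (g n) (g n')) - 2 * Psi (g n) - 2 * Psi (g n') <= e.
Proof.
  destruct shrinking_suprema as [V [L [HVub [Hex [HL HLV]]]]].
  destruct (choice _ Hex) as [g Hg]; exists g; split; [intro n; apply Hg|].
  intros e He.
  destruct (HL (e / 8) ltac:(lra)) as [N1 HN1].
  destruct (inv_succ_small (e / 8) ltac:(lra)) as [N2 HN2].
  exists (max N1 N2); intros n n' hn hn'.
  (* the midpoint lies in the smaller index hull, where [V] is within [e/8] of [L] *)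
  set (p := min n n').
  assert (Hmid : Gam p (midp (g n) (g n')))
    by (apply Gam_midp; [apply (Gam_decr p n)|apply (Gam_decr p n')]; try apply Hg;
        unfold p; lia).
  pose proof (HVub p _ Hmid).
  specialize (HN1 p ltac:(unfold p; lia)); unfold Rdist in HN1; apply Rabs_def2 in HN1.
  pose proof (HN2 n ltac:(lia)); pose proof (HN2 n' ltac:(lia)).
  pose proof (proj2 (Hg n)); pose proof (proj2 (Hg n')); pose proof (HLV n); pose proof (HLV n').
  lra.
Qed.

End NearMaximisers.

Section Gamma.
Context {O : Type} (A : (O -> Prop) -> Prop) (HA : is_algebra A).
Variable mu : nat -> (O -> Prop) -> R.

Lemma in_Gamma_self n : in_Gamma A mu n (mu n).
Proof.
  exists 0%nat, (fun _ => 1); split; [intros; lra|split; [reflexivity|]].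
  intros F _; simpl; rewrite Nat.add_0_r; ring.
Qed.

Lemma in_Gamma_content M n m : (forall n, content A (mu n)) -> (forall n, mu n sfull <= M) ->
  in_Gamma A mu n m -> content A m /\ m sfull <= M.
Proof.
  intros Hmu HM [N [w [Hw [Hs Hm]]]]; split; [split|].
  - intros F G HF HG Hd; change (fun x => F x \/ G x) with (sunion F G).
    rewrite (Hm F HF), (Hm G HG), (Hm _ (A_union A HA F G HF HG)), <- plus_sum.
    apply sum_eq; intros i _; rewrite (add_union A (mu (n + i)%nat) (proj1 (Hmu _)) F G);
      auto; ring.
  - intros F HF; rewrite (Hm F HF); apply sum_nonneg; intros i _.
    apply Rmult_le_pos; auto; apply (proj2 (Hmu _)); auto.
  - rewrite (Hm _ (A_full A HA)), <- (Rmult_1_r M), <- Hs, scal_sum.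
    apply sum_Rle; intros i _; apply Rmult_le_compat_l; auto.
Qed.

Lemma in_Gamma_succ n m : in_Gamma A mu (S n) m -> in_Gamma A mu n m.
Proof.
  intros [N [w [Hw [Hs Hm]]]].
  exists (S N), (fun i => match i with 0%nat => 0 | S j => w j end); split; [|split].
  - intros [|i]; auto; lra.
  - rewrite decomp_sum by lia; simpl pred; rewrite Rplus_0_l; exact Hs.
  - intros F HF; rewrite (Hm F HF), (decomp_sum _ (S N)) by lia; simpl pred.
    rewrite Rmult_0_l, Rplus_0_l; apply sum_eq; intros i _.
    replace (n + S i)%nat with (S n + i)%nat by lia; reflexivity.
Qed.

Lemma in_Gamma_decr n n' m : (n <= n')%nat -> in_Gamma A mu n' m -> in_Gamma A mu n m.
Proof. intros H; induction H; auto; intro h; apply IHle, in_Gamma_succ; auto. Qed.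

Lemma sum_pad (f : nat -> R) N k :
  sum_f_R0 (fun i => if Nat.leb i N then f i else 0) (N + k) = sum_f_R0 f N.
Proof.
  induction k as [|k IH].
  - rewrite Nat.add_0_r; apply sum_eq; intros i Hi; apply Nat.leb_le in Hi; rewrite Hi; auto.
  - rewrite Nat.add_succ_r, tech5, IH; replace (Nat.leb (S (N + k)) N) with false; [ring|].
    symmetry; apply Nat.leb_gt; lia.
Qed.

Lemma in_Gamma_mid n a b : in_Gamma A mu n a -> in_Gamma A mu n b -> in_Gamma A mu n (mid a b).
Proof.
  intros [Na [wa [Hwa [Hsa Ha]]]] [Nb [wb [Hwb [Hsb Hb]]]].
  set (pa := fun i => if Nat.leb i Na then wa i else 0).
  set (pb := fun i => if Nat.leb i Nb then wb i else 0).
  assert (Hpad : forall (w : nat -> R) N k (f : nat -> R),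
    sum_f_R0 (fun i => (if Nat.leb i N then w i else 0) * f i) (N + k) =
    sum_f_R0 (fun i => w i * f i) N).
  { intros w N k f; rewrite <- (sum_pad (fun i => w i * f i) N k).
    apply sum_eq; intros i _; destruct (Nat.leb i N); ring. }
  exists (Na + Nb)%nat, (fun i => (pa i + pb i) / 2); split; [|split].
  - intro i; unfold pa, pb; pose proof (Hwa i); pose proof (Hwb i).
    destruct (Nat.leb i Na), (Nat.leb i Nb); lra.
  - rewrite (sum_eq _ (fun i => / 2 * (pa i * 1) + / 2 * (pb i * 1)) (Na + Nb))
      by (intros; unfold Rdiv; ring).
    rewrite plus_sum, !sum_scal; unfold pa, pb.
    rewrite (Hpad wa Na Nb (fun _ => 1)), (Nat.add_comm Na Nb), (Hpad wb Nb Na (fun _ => 1)).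
    rewrite (sum_eq (fun i => wa i * 1) wa Na), (sum_eq (fun i => wb i * 1) wb Nb)
      by (intros; ring); lra.
  - intros F HF; unfold mid; rewrite (Ha F HF), (Hb F HF).
    rewrite (sum_eq (fun i => (pa i + pb i) / 2 * mu (n + i)%nat F)
      (fun i => / 2 * (pa i * mu (n + i)%nat F) + / 2 * (pb i * mu (n + i)%nat F)) (Na + Nb))
      by (intros; unfold Rdiv; ring).
    rewrite plus_sum, !sum_scal; unfold pa, pb.
    rewrite (Hpad wa Na Nb (fun i => mu (n + i)%nat F)), (Nat.add_comm Na Nb),
      (Hpad wb Nb Na (fun i => mu (n + i)%nat F)); lra.
Qed.

End Gamma.

Section Limits.
Context {O : Type} (A : (O -> Prop) -> Prop) (HA : is_algebra A).

Lemma uniform_limit (f : nat -> (O -> Prop) -> R) :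
  (forall e, 0 < e -> exists N, forall n n', (N <= n)%nat -> (N <= n')%nat ->
     forall E, A E -> Rabs (f n E - f n' E) <= e) ->
  (forall E, A E -> Un_cv (fun n => f n E) (limit (fun n => f n E))) /\
  (forall e, 0 < e -> exists N, forall n, (N <= n)%nat ->
     forall E, A E -> Rabs (limit (fun n => f n E) - f n E) <= e).
Proof.
  intro HC.
  assert (Hcv : forall E, A E -> Un_cv (fun n => f n E) (limit (fun n => f n E))).
  { intros E HE; apply limit_spec.
    destruct (R_complete (fun n => f n E)) as [l Hl]; [|eauto].
    intros e He; destruct (HC (e / 2) ltac:(lra)) as [N HN]; exists N; intros n n' hn hn'.
    unfold Rdist; pose proof (HN n n' hn hn' E HE); lra. }
  split; [exact Hcv|].
  intros e He; destruct (HC e He) as [N HN]; exists N; intros n hn E HE.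
  assert (f n E - e <= limit (fun n => f n E)).
  { apply (lim_ge _ _ _ (Hcv E HE)); exists N; intros n' hn'.
    pose proof (HN n' n hn' hn E HE) as h; apply abs_le_bounds in h; lra. }
  assert (limit (fun n => f n E) <= f n E + e).
  { apply (lim_le _ _ _ (Hcv E HE)); exists N; intros n' hn'.
    pose proof (HN n' n hn' hn E HE) as h; apply abs_le_bounds in h; lra. }
  apply Rabs_le; lra.
Qed.

Lemma content_limit (f : nat -> (O -> Prop) -> R) (L : (O -> Prop) -> R) :
  (forall n, content A (f n)) -> (forall E, A E -> Un_cv (fun n => f n E) (L E)) ->
  content A L.
Proof.
  intros Hf Hcv; split.
  - intros F G HF HG Hd; change (fun x => F x \/ G x) with (sunion F G).
    apply (UL_sequence (fun n => f n (sunion F G))); [apply Hcv, A_union; auto|].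
    apply (Un_cv_ext (fun n => f n F + f n G)); [|apply CV_plus; auto].
    intro n; symmetry; apply (add_union A (f n)); auto; apply Hf.
  - intros F HF; apply (lim_ge _ _ _ (Hcv F HF)); exists 0%nat; intros n _; apply Hf; auto.
Qed.

End Limits.

(** The vanishing concavity defect of [Phi] along [g] makes each sequence
    [g n /\ k lam] uniformly Cauchy: choose a precision [r >= k] fine enough. *)
Lemma truncations_cauchy {O : Type} (A : (O -> Prop) -> Prop) (HA : is_algebra A)
  (lam : (O -> Prop) -> R) (g : nat -> (O -> Prop) -> R) :
  content A lam -> (forall n, content A (g n)) ->
  (forall e, 0 < e -> exists N, forall n n', (N <= n)%nat -> (N <= n')%nat ->
     4 * Phi A lam (mid (g n) (g n')) - 2 * Phi A lam (g n) - 2 * Phi A lam (g n') <= e) ->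
  forall (k : nat) e, 0 < e -> exists N, forall n n', (N <= n)%nat -> (N <= n')%nat ->
    forall E, A E ->
    Rabs (meet A (g n) (rscale (INR k) lam) E - meet A (g n') (rscale (INR k) lam) E) <= e.
Proof.
  intros Hl Hg Hgap k e He.
  assert (Hl0 : 0 <= lam sfull) by (apply (proj2 Hl), A_full; auto).
  (* a precision [r >= k] whose ladder step costs at most [e / 2] *)
  destruct (inv_succ_small (e / (4 * (lam sfull + 1)))) as [r0 Hr0];
    [apply Rdiv_lt_0_compat; lra|].
  set (r := max r0 k).
  assert (Hstep : 2 * step r * lam sfull <= e / 2).
  { pose proof (Hr0 r ltac:(unfold r; lia)); pose proof (step_le_inv r).
    pose proof (step_pos r).
    assert (step r * (4 * (lam sfull + 1)) <= e)
      by (apply Rle_trans with (e / (4 * (lam sfull + 1)) * (4 * (lam sfull + 1)));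
          [apply Rmult_le_compat_r; lra|right; field; lra]).
    nra. }
  destruct (Hgap (weight r * (e / 2))) as [N HN]; [pose proof (weight_pos r); nra|].
  exists N; intros n n' hn hn' E HE.
  assert (Hgr : ladder_gap A (g n) (g n') lam (step r) (height r) sfull <= e / 2).
  { pose proof (Phi_gap A HA lam Hl (g n) (g n') r (Hg n) (Hg n')).
    pose proof (HN n n' hn hn'); pose proof (weight_pos r).
    apply Rmult_le_reg_l with (weight r); auto; lra. }
  assert (HJ : (k * 2 ^ r <= height r)%nat) by (unfold height, r; apply Nat.mul_le_mono_r; lia).
  pose proof (ladder_dev A HA (g n) (g n') lam (step r) _ _ (Hg n) (Hg n') Hl (step_pos r) HJ)
    as Hdev.
  rewrite step_height in Hdev.
  apply Rle_trans with (2 * step r * lam sfull + ladder_gap A (g n) (g n') lam (step r) (height r) sfull);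
    [|lra].
  assert (Hk := content_rscale A (INR k) lam (pos_INR k) Hl).
  exact (dev_le_abs A HA _ _ (add_sub A _ _ (meet_additive A HA _ _ (Hg n) Hk)
    (meet_additive A HA _ _ (Hg n') Hk)) Hdev E HE).
Qed.

Lemma Gamma_selection {O : Type} (A : (O -> Prop) -> Prop) (HA : is_algebra A)
  (mu : nat -> (O -> Prop) -> R) (lam : (O -> Prop) -> R) (M : R) :
  (forall n, content A (mu n)) -> (forall n, mu n sfull <= M) -> content A lam ->
  exists g : nat -> (O -> Prop) -> R,
    (forall n, in_Gamma A mu n (g n)) /\ (forall n, content A (g n)) /\
    (forall n, g n sfull <= M) /\
    (forall (k : nat) e, 0 < e -> exists N, forall n n', (N <= n)%nat -> (N <= n')%nat ->
      forall E, A E ->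
      Rabs (meet A (g n) (rscale (INR k) lam) E - meet A (g n') (rscale (INR k) lam) E) <= e).
Proof.
  intros Hmu HmuM Hl.
  assert (HG := fun n m Hm => in_Gamma_content A HA mu M n m Hmu HmuM Hm).
  destruct (near_maximisers _ mid (in_Gamma A mu) (Phi A lam) (2 * M)) as [g [HgG Hgap]].
  - intro n; exists (mu n); apply in_Gamma_self.
  - intros n n' m; apply in_Gamma_decr.
  - intros n a b; apply in_Gamma_mid.
  - intros n m Hm; destruct (HG n m Hm) as [Hc HcM].
    pose proof (Phi_bounds A HA lam Hl m Hc); lra.
  - assert (Hg : forall n, content A (g n)) by (intro n; apply (HG n), HgG).
    exists g; split; [exact HgG|split; [exact Hg|split]].
    + intro n; apply (HG n), HgG.
    + exact (truncations_cauchy A HA lam g Hl Hg Hgap).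
Qed.

(** * The limit content [xi] *)

Section LimitContent.
Context {O : Type} (A : (O -> Prop) -> Prop) (HA : is_algebra A).
Variables (lam : (O -> Prop) -> R) (g : nat -> (O -> Prop) -> R) (M : R).
Hypotheses (Hl : content A lam) (Hg : forall n, content A (g n))
  (HgM : forall n, g n sfull <= M).
Hypothesis Hcauchy : forall (k : nat) e, 0 < e -> exists N, forall n n',
  (N <= n)%nat -> (N <= n')%nat -> forall E, A E ->
  Rabs (meet A (g n) (rscale (INR k) lam) E - meet A (g n') (rscale (INR k) lam) E) <= e.

Definition rho (k : nat) (E : O -> Prop) : R :=
  limit (fun n => meet A (g n) (rscale (INR k) lam) E).
Definition xi (E : O -> Prop) : R := limit (fun k => rho k E).

Lemma content_trunc k n : content A (meet A (g n) (rscale (INR k) lam)).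
Proof. apply meet_content; auto; apply content_rscale; auto; apply pos_INR. Qed.

Lemma rho_cv k E : A E -> Un_cv (fun n => meet A (g n) (rscale (INR k) lam) E) (rho k E).
Proof. exact (proj1 (uniform_limit A _ (Hcauchy k)) E). Qed.

Lemma rho_uniform k : forall e, 0 < e -> exists N, forall n, (N <= n)%nat ->
  forall E, A E -> Rabs (rho k E - meet A (g n) (rscale (INR k) lam) E) <= e.
Proof. exact (proj2 (uniform_limit A _ (Hcauchy k))). Qed.

Lemma rho_content k : content A (rho k).
Proof. apply (content_limit A HA _ _ (content_trunc k)), rho_cv. Qed.

Lemma rho_bounds k E : A E ->
  rho k E <= INR k * lam E /\ rho k E <= M /\ rho k E <= rho (S k) E.
Proof.
  intro HE; assert (Hk := fun k => content_rscale A (INR k) lam (pos_INR k) Hl).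
  split; [|split].
  - apply (lim_le _ _ _ (rho_cv k E HE)); exists 0%nat; intros n _.
    apply (meet_le_r A HA); auto.
  - apply (lim_le _ _ _ (rho_cv k E HE)); exists 0%nat; intros n _.
    pose proof (meet_le_l A HA _ _ (Hg n) (Hk k) E HE).
    pose proof (content_le_full A HA (g n) E (Hg n) HE); pose proof (HgM n); lra.
  - assert (Hle : forall F, A F -> rscale (INR k) lam F <= rscale (INR (S k)) lam F)
      by (intros F HF; unfold rscale; rewrite S_INR; pose proof (proj2 Hl F HF); lra).
    exact (Rle_cv_lim (fun n => meet_mono A HA _ _ _ _ E (Hg n) (Hk k) (Hg n)
      (Hk (S k)) HE (fun F _ => Rle_refl _) Hle) (rho_cv k E HE) (rho_cv (S k) E HE)).
Qed.

(** [rho k] increases with [k] and stays below [M], so [xi] exists and is a content. *)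
Lemma rho_mono k j E : (k <= j)%nat -> A E -> rho k E <= rho j E.
Proof.
  intros Hkj HE; induction Hkj as [|j _ IH]; [lra|].
  pose proof (rho_bounds j E HE); lra.
Qed.

Lemma xi_cv E : A E -> Un_cv (fun k => rho k E) (xi E).
Proof.
  intro HE; apply limit_spec.
  destruct (growing_cv (fun k => rho k E)) as [l Hlim]; eauto.
  - intro k; apply (rho_bounds k E HE).
  - exists M; intros x [k ->]; apply (rho_bounds k E HE).
Qed.

Lemma xi_content : content A xi.
Proof. exact (content_limit A HA _ _ rho_content xi_cv). Qed.

Lemma rho_le_xi k E : A E -> rho k E <= xi E.
Proof.
  intro HE; apply (lim_ge _ _ _ (xi_cv E HE)); exists k; intros j hj; apply rho_mono; auto.
Qed.

(** [xi - rho j] is a content whose total mass tends to [0]. *)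
Lemma xi_tail e : 0 < e -> exists j0, forall j, (j0 <= j)%nat ->
  forall E, A E -> xi E <= rho j E + e.
Proof.
  intro He; destruct (xi_cv sfull (A_full A HA) e He) as [j0 Hj0]; exists j0; intros j hj E HE.
  specialize (Hj0 j hj); unfold Rdist in Hj0; apply Rabs_def2 in Hj0.
  assert (Hc : content A (fun F => xi F - rho j F)).
  { split; [apply add_sub; [exact (proj1 xi_content)|exact (proj1 (rho_content j))]|].
    intros F HF; pose proof (rho_le_xi j F HF); lra. }
  pose proof (content_le_full A HA _ E Hc HE); lra.
Qed.

Lemma xi_below e : 0 < e -> exists N, forall n, (N <= n)%nat -> forall E, A E -> xi E <= g n E + e.
Proof.
  intro He; destruct (xi_tail (e / 2) ltac:(lra)) as [j Hj].
  destruct (rho_uniform j (e / 2) ltac:(lra)) as [N HN]; exists N; intros n hn E HE.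
  pose proof (Hj j (le_n _) E HE); pose proof (abs_le_bounds _ _ (HN n hn E HE)).
  pose proof (meet_le_l A HA _ _ (Hg n) (content_rscale A (INR j) lam (pos_INR j) Hl) E HE).
  lra.
Qed.

Lemma rho_is_inf k : is_inf A xi (scale_sf k lam) (rho k).
Proof.
  assert (Hk := content_rscale A (INR k) lam (pos_INR k) Hl).
  split; [apply (content_is_ba A HA), rho_content|split; [|split]].
  - intros F HF; apply rho_le_xi; auto.
  - intros F HF; apply (rho_bounds k F HF).
  - intros tau [Ht _] Htx Htl E HE; apply le_eps; intros e He.
    destruct (xi_below (e / 3) ltac:(lra)) as [N1 HN1].
    destruct (rho_uniform k (e / 3) ltac:(lra)) as [N2 HN2].
    set (n := max N1 N2).
    destruct (meet_approx A HA (g n) _ (Hg n) Hk E (e / 3) HE ltac:(lra)) as [G [HG HGe]].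
    rewrite (add_split A HA tau Ht E G HE HG).
    pose proof (Htx _ (A_inter A HA E G HE HG)); pose proof (Htl _ (A_diff A HA E G HE HG)).
    pose proof (HN1 n ltac:(unfold n; lia) _ (A_inter A HA E G HE HG)).
    pose proof (abs_le_bounds _ _ (HN2 n ltac:(unfold n; lia) E HE)).
    unfold scale_sf, rscale in *; lra.
Qed.

Lemma rho_norm_cv k e : 0 < e -> exists N, forall n, (N <= n)%nat ->
  norm_le A (fun F => rho k F - meet A (g n) (scale_sf k lam) F) e.
Proof.
  intro He; destruct (rho_uniform k (e / 2) ltac:(lra)) as [N HN]; exists N; intros n hn.
  apply (norm_le_of_dev A HA).
  - apply add_sub; [exact (proj1 (rho_content k))|exact (proj1 (content_trunc k n))].
  - intros F HF; pose proof (abs_le_bounds _ _ (HN n hn F HF)).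
    pose proof (abs_le_bounds _ _ (HN n hn _ (A_compl A HA F HF))).
    change (scale_sf k lam) with (rscale (INR k) lam); lra.
Qed.

(** [xi] is a positive bounded content absolutely continuous w.r.t. [lam], as
    [xi <= rho j + e <= j lam + e] ([xi_tail]). *)
Lemma xi_ba_ac_pos : is_ba_ac_pos A lam xi.
Proof.
  split; [split; [apply (content_is_ba A HA)|]; apply xi_content|].
  apply content_abs_cont; auto using xi_content.
  intros e He; destruct (xi_tail e He) as [j Hj]; exists (INR j); split; [apply pos_INR|].
  intros E HE; pose proof (Hj j (le_n _) E HE); pose proof (rho_bounds j E HE); lra.
Qed.

Lemma xi_le_liminf E : A E -> forall e, 0 < e -> exists N, forall n, (N <= n)%nat ->
  xi E - e < g n E.
Proof.
  intros HE e He; destruct (xi_below (e / 2) ltac:(lra)) as [N HN]; exists N; intros n hn.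
  pose proof (HN n hn E HE); lra.
Qed.

End LimitContent.

Lemma series_content {O : Type} (A : (O -> Prop) -> Prop) (HA : is_algebra A)
  (mu : nat -> (O -> Prop) -> R) (c : nat -> R) (lam : (O -> Prop) -> R) :
  (forall n, content A (mu n)) -> (forall n, 0 <= c n) ->
  (forall E, A E -> infinite_sum (fun n => c n * mu n E) (lam E)) -> content A lam.
Proof.
  intros Hmu Hc Hlam.
  apply (content_limit A HA (fun N E => sum_f_R0 (fun n => c n * mu n E) N)); [|exact Hlam].
  intro N; split.
  - intros F G HF HG Hd; change (fun x => F x \/ G x) with (sunion F G).
    rewrite <- plus_sum; apply sum_eq; intros n _.
    rewrite (add_union A (mu n) (proj1 (Hmu n)) F G HF HG Hd); ring.
  - intros F HF; apply sum_nonneg; intros n _; apply Rmult_le_pos; auto; apply Hmu; auto.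
Qed.

Theorem mainTheorem13 (Omega : Type) (A : (Omega -> Prop) -> Prop)
  (HA : is_algebra A)
  (mu : nat -> (Omega -> Prop) -> R)
  (Hmu : forall n, is_ba_pos A (mu n))
  (Hbd : exists M, forall n, norm_le A (mu n) M)
  (lam : (Omega -> Prop) -> R)
  (Hlam : forall E, A E -> infinite_sum (fun n => (/ 2) ^ (S n) * mu n E) (lam E)) :
  exists (xi : (Omega -> Prop) -> R) (m : nat -> (Omega -> Prop) -> R),
    is_ba_ac_pos A lam xi /\
    (forall n, in_Gamma A mu n (m n)) /\
    (forall k : nat, exists (rho : (Omega -> Prop) -> R) (rhon : nat -> (Omega -> Prop) -> R),
        is_inf A xi (scale_sf k lam) rho /\
        (forall n, is_inf A (m n) (scale_sf k lam) (rhon n)) /\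
        (forall eps, 0 < eps -> exists N, forall n, (N <= n)%nat ->
            norm_le A (fun F => rho F - rhon n F) eps)) /\
    (forall E, A E -> forall eps, 0 < eps -> exists N, forall n, (N <= n)%nat ->
        xi E - eps < m n E).
Proof.
  destruct Hbd as [M HM].
  assert (Hmu' : forall n, content A (mu n))
    by (intro n; destruct (Hmu n) as [[H1 _] H2]; split; auto).
  assert (HmuM : forall n, mu n sfull <= M)
    by (intro n; pose proof (abs_le_tv A (mu n) sfull M (A_full A HA) (HM n));
        pose proof (Rle_abs (mu n sfull)); lra).
  assert (Hl : content A lam)
    by (apply (series_content A HA mu (fun n => (/ 2) ^ (S n))); auto; intro; apply pow_le; lra).
  destruct (Gamma_selection A HA mu lam M Hmu' HmuM Hl) as [g [HgG [Hg [HgM Hc]]]].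
  exists (xi A lam g), g; split; [|split; [exact HgG|split]].
  - exact (xi_ba_ac_pos A HA lam g M Hl Hg HgM Hc).
  - intro k; exists (rho A lam g k), (fun n => meet A (g n) (scale_sf k lam)).
    split; [exact (rho_is_inf A HA lam g M Hl Hg HgM Hc k)|split].
    + intro n; apply (meet_is_inf A HA); auto; apply content_rscale; auto; apply pos_INR.
    + exact (rho_norm_cv A HA lam g Hl Hg Hc k).
  - exact (xi_le_liminf A HA lam g M Hl Hg HgM Hc).
Qed.
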